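(* (i) For every feasible transition $s\xrightarrow{\alpha}s'$ of the BDM between states $s,s'\in S$, with $\alpha\in\{D,I,N_=,N_<,d_-,b_+\}$, one has $K(s')=K(s)+1$ if $\alpha=I$, $K(s')=K(s)-1$ if $\alpha=N_<$, and $K(s')=K(s)$ if $\alpha\in\{D,N_=,d_-,b_+\}$. (ii) Consequently, if $s_0\xrightarrow{\alpha_1\cdots\alpha_k}s$ is any path of feasible transitions from the initial state $s_0$ to $s$, and $\#I$, $\#N_<$ denote the numbers of indices $i$ with $\alpha_i=I$, resp. $\alpha_i=N_<$, then $K(s)-K(s_0)=K(s)=\#I-\#N_<$.
   Context: Fix integers $M\ge 1$ and $q\ge 2$. The augmented state set is $\overline S=\{(b_1,\dots,b_M,d;T,t): b_m,d,T\in\mathbb Z,\ 1\le t\le M+1,\ d+T+\sum_{m=1}^M b_m=0\}$, and the BDM state set is $S=\{s\in\overline S: 0\le T\le M\}$. The initial state is $s_0=(0,\dots,0,0;0,M+1)$. The feasible transitions (actions) from $s=(b_1,\dots,b_M,d;T,t)\in S$ are: (a) if $t\le M$ and $b_t>d$: action $D$ (probability $(q-1)/q$) to $(b_1,\dots,b_{t-1},d,b_{t+1},\dots,b_M,b_t;T,t+1)$ (swap of $b_t$ and $d$), and action $I$ (probability $1/q$) to $(b_1,\dots,b_M,d;T,t+1)$; (b) if $t\le M$ and $b_t=d$: action $N_=$ (probability 1) to $(b_1,\dots,b_M,d;T,t+1)$; (c) if $t\le M$ and $b_t<d$: action $N_<$ (probability 1) to $(b_1,\dots,b_M,d;T,t+1)$;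 (d) if $t=M+1$, $T<M$: action $d_-$ (probability 1) to $(b_1,\dots,b_M,d-1;T+1,1)$; (e) if $t=M+1$, $T=M$: action $b_+$ (probability 1) to $(b_1+1,\dots,b_M+1,d;0,1)$. For $s=(b_1,\dots,b_M,d;T,t)\in\overline S$ let $x=(b_1,\dots,b_{t-1},d,b_t,\dots,b_M)$ ($d$ in position $t$), let $\tilde b_1\ge\dots\ge\tilde b_{M+1}$ be its entries sorted nonincreasingly and $\pi_s$ the minimum number of neighbouring transpositions needed to sort $x$ nonincreasingly. The class of $s$ is $K(s)=-\pi_s+MT+2\sum_{m=1}^{M+1}\tilde b_m(M+1-m)$; note $K(s_0)=0$. *)

From mathcomp Require Import all_boot all_order all_algebra.
Set Implicit Arguments. Unset Strict Implicit. Unset Printing Implicit Defensive.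
Import Order.TTheory GRing.Theory Num.Theory.
Local Open Scope ring_scope.

(* An augmented state (b_1..b_M, d; T, t).  b is stored as a list (b_1,...,b_M). *)
Record bdm_state := BDMState { sb : seq int; sd : int; sT : int; st : nat }.

Definition in_Sbar (M : nat) (s : bdm_state) : Prop :=
  [/\ size (sb s) = M, (1 <= st s <= M.+1)%N &
      sd s + sT s + \sum_(x <- sb s) x = 0].

Definition in_S (M : nat) (s : bdm_state) : Prop :=
  in_Sbar M s /\ 0 <= sT s <= M%:Z.

Definition s0 (M : nat) : bdm_state := BDMState (nseq M 0) 0 0 M.+1.

(* b_t (1-indexed) *)
Definition bt (s : bdm_state) : int := nth 0 (sb s) (st s).-1.

Inductive action := A_D | A_I | A_Neq | A_Nlt | A_dminus | A_bplus.

Inductive trans (M q : nat) : bdm_state -> action -> rat -> bdm_state -> Prop :=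
| tr_D b d T t : in_S M (BDMState b d T t) -> (t <= M)%N ->
    nth 0 b t.-1 > d ->
    trans M q (BDMState b d T t) A_D ((q%:R - 1) / q%:R)
          (BDMState (set_nth 0 b t.-1 d) (nth 0 b t.-1) T t.+1)
| tr_I b d T t : in_S M (BDMState b d T t) -> (t <= M)%N ->
    nth 0 b t.-1 > d ->
    trans M q (BDMState b d T t) A_I (1 / q%:R) (BDMState b d T t.+1)
| tr_Neq b d T t : in_S M (BDMState b d T t) -> (t <= M)%N ->
    nth 0 b t.-1 = d ->
    trans M q (BDMState b d T t) A_Neq 1 (BDMState b d T t.+1)
| tr_Nlt b d T t : in_S M (BDMState b d T t) -> (t <= M)%N ->
    nth 0 b t.-1 < d ->
    trans M q (BDMState b d T t) A_Nlt 1 (BDMState b d T t.+1)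
| tr_dminus b d T : in_S M (BDMState b d T M.+1) -> T < M%:Z ->
    trans M q (BDMState b d T M.+1) A_dminus 1 (BDMState b (d - 1) (T + 1) 1)
| tr_bplus b d : in_S M (BDMState b d M%:Z M.+1) ->
    trans M q (BDMState b d M%:Z M.+1) A_bplus 1
          (BDMState (map (fun x => x + 1) b) d 0 1).

Inductive bdm_path (M q : nat) : bdm_state -> seq action -> bdm_state -> Prop :=
| path_nil s : bdm_path M q s [::] s
| path_cons s a p s' l s'' : trans M q s a p s' -> bdm_path M q s' l s'' ->
    bdm_path M q s (a :: l) s''.

Definition xvec (s : bdm_state) : seq int :=
  take (st s).-1 (sb s) ++ sd s :: drop (st s).-1 (sb s).

Definition noninc (x : seq int) : bool := sorted (fun a b : int => b <= a) x.

(* the neighbouring transposition exchanging positions i and i+1 (0-indexed) *)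
Definition adj_swap (x : seq int) (i : nat) : seq int :=
  set_nth 0 (set_nth 0 x i (nth 0 x i.+1)) i.+1 (nth 0 x i).

Definition sortable_in (x : seq int) (n : nat) : bool :=
  [exists l : n.-tuple 'I_(size x).-1,
     noninc (foldl (fun y (i : 'I_(size x).-1) => adj_swap y i) x l)].

(* minimal number of neighbouring transpositions sorting x nonincreasingly;
   the search range 0..|x|^2 always contains a valid count (bubble sort needs
   at most |x|(|x|-1)/2 swaps), so this is exactly the minimum. *)
Definition pi_min (x : seq int) : nat :=
  find (sortable_in x) (iota 0 ((size x) ^ 2).+1).

Definition Kclass (M : nat) (s : bdm_state) : int :=
  let x := xvec s in
  let tb := sort (fun a b : int => b <= a) x in
  - (pi_min x)%:Z + M%:Z * sT s
  + 2 * \sum_(0 <= i < M.+1) nth 0 tb i * (M - i)%:Z.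

Definition count_act (a : action) (l : seq action) : nat :=
  count (fun b => match a, b with
                  | A_D, A_D | A_I, A_I | A_Neq, A_Neq | A_Nlt, A_Nlt
                  | A_dminus, A_dminus | A_bplus, A_bplus => true
                  | _, _ => false end) l.

Definition Kdelta (a : action) : int :=
  match a with A_I => 1 | A_Nlt => -1 | _ => 0 end.

From mathcomp Require Import all_boot all_order all_algebra.
From mathcomp Require Import zify.
Set Implicit Arguments.
Unset Strict Implicit.
Unset Printing Implicit Defensive.

Import Order.TTheory GRing.Theory Num.Theory.
Local Open Scope ring_scope.

(* Sorting x nonincreasingly by adjacent transpositions needs exactly as many
   swaps as x has ascending pairs (bubble sort removes one per swap, and no swap
   removes more), and the weighted sum of the sorted entries equals
   2 sum_{i<j} max(x_i, x_j), a symmetric function of x.  So K(s) is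
   -inv(x) + M T + Q(x) with Q symmetric.  A step t -> t+1 exchanges d with its
   right neighbour b_t, which changes inv(x) by -1, 0 or +1 according to the
   comparison of d and b_t; action D also exchanges the roles of d and b_t and
   so leaves x unchanged.  The steps d_- and b_+ rotate d to the front; counting
   the b_m below d, the resulting changes of inv and Q cancel the change of M T. *)

Fixpoint inversions (x : seq int) : nat :=
  if x is a :: x' then (count (fun y : int => (a < y)%R) x' + inversions x')%N else 0%N.

Lemma inversions_cat p x : inversions (p ++ x) =
  (inversions p + inversions x + \sum_(a <- p) count (fun y => (a < y)%R) x)%N.
Proof.
elim: p => [|a p IHp] /=; first by rewrite big_nil addn0.
rewrite big_cons IHp count_cat; set S := (\sum_(_ <- p) _)%N; lia.
Qed.

Lemma inversions_rcons x d :
  inversions (rcons x d) = (inversions x + count (fun y => (y < d)%R) x)%N.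
Proof. by elim: x => [|a x IHx] //=; rewrite IHx -cats1 count_cat /=; lia. Qed.

Lemma inversions_map f x : {mono f : a b / a < b} -> inversions (map f x) = inversions x.
Proof.
move=> f_mono; elim: x => [|a x IHx] //=; rewrite IHx count_map; congr (_ + _)%N.
by apply: eq_count => y /=; rewrite f_mono.
Qed.

Lemma inversions_swap p a b r :
  (inversions (p ++ a :: b :: r) + (b < a)%R =
   inversions (p ++ b :: a :: r) + (a < b)%R)%N.
Proof.
rewrite !inversions_cat /=.
have -> : (\sum_(c <- p) count (fun y => (c < y)%R) [:: a, b & r] =
           \sum_(c <- p) count (fun y => (c < y)%R) [:: b, a & r])%N.
  by apply: eq_bigr => c _ /=; lia.
by set S := (\sum_(_ <- p) _)%N; case: (a < b)%R; case: (b < a)%R => /=; lia.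
Qed.

Lemma inversions_eq0 x : (inversions x == 0)%N = noninc x.
Proof.
elim: x => [|a x IHx] //=.
rewrite addn_eq0 IHx /noninc /= (path_sortedE (rev_trans le_trans)).
congr (_ && _); rewrite eqn0Ngt -has_count -all_predC.
by apply: eq_all => y /=; rewrite leNgt.
Qed.

Lemma inversions_le x : (inversions x <= size x ^ 2)%N.
Proof.
elim: x => [|a x IHx] //=.
have := @count_size int (fun y => (a < y)%R) x; move: IHx; rewrite -!mulnn; nia.
Qed.

Lemma adj_swap_cat p a b r :
  adj_swap (p ++ a :: b :: r) (size p) = p ++ b :: a :: r.
Proof. by elim: p => [|c p IHp] //; rewrite /adj_swap /= in IHp *; rewrite IHp. Qed.

Lemma cat_take_nth2_drop (y : seq int) i : (i.+1 < size y)%N ->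
  y = take i y ++ y`_i :: y`_i.+1 :: drop i.+2 y.
Proof.
move=> lt_i1_y; rewrite -(drop_nth 0 lt_i1_y) -(drop_nth 0 (ltnW lt_i1_y)).
by rewrite cat_take_drop.
Qed.

Lemma adj_swapE y i : (i.+1 < size y)%N ->
  adj_swap y i = take i y ++ y`_i.+1 :: y`_i :: drop i.+2 y.
Proof.
move=> lt_i1_y; have size_take_i : size (take i y) = i by rewrite size_takel //; lia.
by rewrite {1}(cat_take_nth2_drop lt_i1_y) -[X in adj_swap _ X]size_take_i adj_swap_cat.
Qed.

Lemma size_adj_swap y i : (i.+1 < size y)%N -> size (adj_swap y i) = size y.
Proof.
by move=> lt_i1_y; rewrite adj_swapE // [in RHS](cat_take_nth2_drop lt_i1_y) !size_cat.
Qed.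

Lemma inversions_adj_swap y i : (i.+1 < size y)%N ->
  (inversions y + (y`_i.+1 < y`_i)%R =
   inversions (adj_swap y i) + (y`_i < y`_i.+1)%R)%N.
Proof.
by move=> lt_i1_y; rewrite adj_swapE // {1}(cat_take_nth2_drop lt_i1_y) inversions_swap.
Qed.

Lemma exists_ascent y : ~~ noninc y ->
  exists2 i, (i.+1 < size y)%N & y`_i < y`_i.+1.
Proof.
elim: y => [|a [|b y] IHy] //; rewrite /noninc /= negb_and -ltNge => /orP[lt_ab|].
  by exists 0%N.
by case/IHy => i lt_i1_y lt_yi; exists i.+1.
Qed.

Section BubbleSort.

Variable N : nat.
Implicit Types (y : seq int) (l : seq 'I_N).

Let swaps y l := foldl (fun z (i : 'I_N) => adj_swap z i) y l.

Lemma inversions_swaps_le y l : N = (size y).-1 ->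
  (inversions y <= inversions (swaps y l) + size l)%N.
Proof.
elim: l y => [|i l IHl] y N_y /=; first by rewrite addn0.
have lt_i1_y : (i.+1 < size y)%N by move: (ltn_ord i); lia.
have := inversions_adj_swap lt_i1_y.
have := IHl (adj_swap y i); rewrite size_adj_swap // => /(_ N_y).
by case: (y`_i.+1 < y`_i); case: (y`_i < y`_i.+1) => /=; lia.
Qed.

Lemma bubble_sort_swaps y : N = (size y).-1 ->
  exists2 l, size l = inversions y & noninc (swaps y l).
Proof.
move inv_y: (inversions y) => n; elim: n y inv_y => [|n IHn] y inv_y N_y.
  by exists [::] => //; rewrite -inversions_eq0 inv_y.
have [i lt_i1_y lt_yi] : exists2 i, (i.+1 < size y)%N & y`_i < y`_i.+1.
  by apply: exists_ascent; rewrite -inversions_eq0 inv_y.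
have lt_iN : (i < N)%N by lia.
have := inversions_adj_swap lt_i1_y; rewrite lt_yi (lt_gtF lt_yi) inv_y /= => inv_swap.
have [l size_l sorted_l] := IHn (adj_swap y i) ltac:(lia) ltac:(by rewrite size_adj_swap).
by exists (Ordinal lt_iN :: l) => /=; lia.
Qed.

End BubbleSort.

Lemma find_iota_min (P : pred nat) n k : (k < n)%N -> P k ->
  (forall j, (j < k)%N -> ~~ P j) -> find P (iota 0 n) = k.
Proof.
move=> lt_kn Pk minP; rewrite -(subnKC (ltnW lt_kn)) iotaD find_cat.
have -> : has P (iota 0 k) = false.
  by apply/hasP => -[j]; rewrite mem_iota => /andP[_ /minP/negP].
have [m ->] : exists m, (n - k)%N = m.+1 by exists (n - k).-1; lia.
by rewrite /= Pk size_iota addn0.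
Qed.

Lemma pi_min_inversions x : pi_min x = inversions x.
Proof.
apply: find_iota_min.
- by rewrite ltnS inversions_le.
- have [l size_l sorted_l] := bubble_sort_swaps (erefl (size x).-1).
  by apply/existsP; exists (Tuple (introT eqP size_l)).
- move=> j lt_j_inv; apply/existsP => -[l sorted_l].
  have := inversions_swaps_le (tval l) (erefl (size x).-1).
  by move: sorted_l; rewrite -inversions_eq0 => /eqP ->; rewrite size_tuple; lia.
Qed.

Definition pair_max_sum (x : seq int) : int :=
  \sum_(a <- x) \sum_(b <- x) Num.max a b - \sum_(a <- x) a.

Lemma pair_max_sum_cons c x :
  pair_max_sum (c :: x) = pair_max_sum x + 2 * \sum_(b <- x) Num.max c b.
Proof.
rewrite /pair_max_sum !big_cons maxxx.
under [X in _ + X - _]eq_bigr => a _ do rewrite big_cons maxC.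
rewrite big_split /=.
set S := \sum_(b <- x) _; set D := \sum_(a <- x) \sum_(b <- x) _; set T := \sum_(a <- x) a.
lia.
Qed.

Lemma perm_pair_max_sum x y : perm_eq x y -> pair_max_sum x = pair_max_sum y.
Proof.
move=> pxy; rewrite /pair_max_sum !(perm_big _ pxy) /=.
by congr (_ - _); apply: eq_bigr => a _; apply: perm_big.
Qed.

Lemma pair_max_sum_sorted x : noninc x ->
  2 * \sum_(0 <= i < size x) x`_i * (size x - i.+1)%:Z = pair_max_sum x.
Proof.
elim: x => [|a x IHx]; first by rewrite big_nil /pair_max_sum !big_nil.
rewrite /noninc /= (path_sortedE (rev_trans le_trans)) => /andP[le_x_a sorted_x].
rewrite pair_max_sum_cons -IHx // big_nat_recl //= subn1 /=.
have -> : \sum_(b <- x) Num.max a b = a * (size x)%:Z.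
  elim: x {IHx sorted_x} le_x_a => [|b x IHx] /=; first by rewrite big_nil mulr0.
  case/andP=> le_ba /IHx; rewrite big_cons (max_l le_ba) => ->.
  by rewrite -addn1 PoszD mulrDr mulr1 addrC.
under eq_bigr => i _ do rewrite subSS.
by rewrite mulrDr addrC.
Qed.

Lemma sum_max_pred a x : \sum_(b <- x) Num.max a b =
  \sum_(b <- x) Num.max (a - 1) b + (count (fun b => b < a) x)%:Z.
Proof.
elim: x => [|b x IHx]; first by rewrite !big_nil.
rewrite !big_cons IHx /= PoszD !maxEle ltNge.
by case: (leP a b) => le_ab; case: (leP (a - 1) b) => le_a1b /=; lia.
Qed.

Lemma pair_max_sum_shift x : pair_max_sum (map (fun b => b + 1) x) =
  pair_max_sum x + (size x)%:Z * ((size x)%:Z - 1).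
Proof.
elim: x => [|c x IHx]; first by rewrite /pair_max_sum !big_nil.
rewrite /= !pair_max_sum_cons IHx big_map.
under eq_bigr => b _ do rewrite -addr_maxl.
rewrite big_split /= big_const_seq count_predT iter_addr_0.
set S := \sum_(b <- x) _; lia.
Qed.

Definition Kvec (M : nat) (x : seq int) (T : int) : int :=
  - (inversions x)%:Z + M%:Z * T + pair_max_sum x.

Lemma size_xvec s : size (xvec s) = (size (sb s)).+1.
Proof. by rewrite /xvec size_cat /= addnS -size_cat cat_take_drop. Qed.

Lemma Kclass_Kvec M s : size (sb s) = M -> Kclass M s = Kvec M (xvec s) (sT s).
Proof.
move=> size_b; rewrite /Kclass /Kvec pi_min_inversions; congr (_ + _).
set x := xvec s; set tb := sort _ x.
have size_tb : size tb = M.+1 by rewrite size_sort size_xvec size_b.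
have sorted_tb : noninc tb by apply: sort_sorted => a b; rewrite orbC le_total.
have perm_tb : perm_eq tb x by rewrite perm_sort.
rewrite -(perm_pair_max_sum perm_tb) -pair_max_sum_sorted // size_tb.
by under [in RHS]eq_bigr => i _ do rewrite subSS.
Qed.

Lemma Kvec_swap M p a b r T : Kvec M (p ++ b :: a :: r) T =
  Kvec M (p ++ a :: b :: r) T + (a < b)%R%:Z - (b < a)%R%:Z.
Proof.
rewrite /Kvec (@perm_pair_max_sum (p ++ b :: a :: r) (p ++ a :: b :: r)).
  by have := inversions_swap p a b r; lia.
by rewrite perm_cat2l; apply/permP => P /=; lia.
Qed.

Lemma count_ge_lt (d : int) x :
  (count (fun y => (d <= y)%R) x + count (fun y => (y < d)%R) x)%N = size x.
Proof.
rewrite -(count_predC (fun y => d <= y)); congr (_ + _)%N.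
by apply: eq_count => y /=; rewrite ltNge.
Qed.

Lemma Kvec_rotate_pred M x d T : size x = M ->
  Kvec M ((d - 1) :: x) (T + 1) = Kvec M (rcons x d) T.
Proof.
move=> size_x; rewrite /Kvec (perm_pair_max_sum (permEl (perm_rcons d x))) /=.
rewrite inversions_rcons !pair_max_sum_cons (sum_max_pred d).
have -> : count (fun y => d - 1 < y) x = count (fun y => d <= y) x.
  by apply: eq_count => y; apply/idP/idP => /=; lia.
have := count_ge_lt d x; rewrite size_x.
set S := \sum_(b <- x) _.
set c1 := count (fun y : int => d <= y) x; set c2 := count (fun y : int => y < d) x; lia.
Qed.

Lemma Kvec_rotate_shift M x d : size x = M ->
  Kvec M (d :: map (fun b => b + 1) x) 0 = Kvec M (rcons x d) M%:Z.
Proof.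
move=> size_x; rewrite /Kvec (perm_pair_max_sum (permEl (perm_rcons d x))) /=.
rewrite inversions_rcons (inversions_map _ (ltrD2r 1)) !pair_max_sum_cons.
rewrite pair_max_sum_shift big_map count_map.
have -> : count (preim (fun b => b + 1) (fun y => d < y)) x = count (fun y => d <= y) x.
  by apply: eq_count => y; apply/idP/idP => /=; lia.
under eq_bigr => b _ do rewrite -[d in Num.max d _](subrK 1) -addr_maxl.
rewrite big_split /= big_const_seq count_predT iter_addr_0 (sum_max_pred d).
have := count_ge_lt d x; rewrite size_x.
set S := \sum_(b <- x) _.
set c1 := count (fun y : int => d <= y) x; set c2 := count (fun y : int => y < d) x.
lia.
Qed.

Lemma xvec_cat p r d T : xvec (BDMState (p ++ r) d T (size p).+1) = p ++ d :: r.
Proof. by rewrite /xvec /= take_size_cat // drop_size_cat. Qed.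

Lemma xvec_first b d T : xvec (BDMState b d T 1) = d :: b.
Proof. by rewrite /xvec /= take0 drop0. Qed.

Lemma xvec_last b d T : xvec (BDMState b d T (size b).+1) = rcons b d.
Proof. by rewrite /xvec /= take_size drop_size cats1. Qed.

Lemma cat_cons_at (T : Type) (x0 : T) (b : seq T) t : (0 < t <= size b)%N ->
  exists p c r, b = p ++ c :: r /\ t = (size p).+1.
Proof.
case/andP=> t_gt0 le_tb; exists (take t.-1 b), (nth x0 b t.-1), (drop t b).
rewrite -[in drop t b](prednK t_gt0) -drop_nth ?cat_take_drop ?prednK //.
by rewrite size_takel ?prednK //; lia.
Qed.

Lemma xvec_exchange b d T t : (0 < t <= size b)%N ->
  xvec (BDMState (set_nth 0 b t.-1 d) b`_t.-1 T t.+1) = xvec (BDMState b d T t).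
Proof.
case/(cat_cons_at 0) => p [c [r [-> ->]]] /=.
rewrite set_nthE size_cat /= ifT; last by lia.
rewrite take_size_cat // drop_cat ltnNge leqnSn subSnn nth_cat ltnn subnn /=.
by rewrite -cat_rcons drop0 xvec_cat -(size_rcons p d) xvec_cat cat_rcons.
Qed.

Lemma Kclass_step M b d T t : size b = M -> (0 < t <= M)%N ->
  Kclass M (BDMState b d T t.+1) =
  Kclass M (BDMState b d T t) + (d < b`_t.-1)%R%:Z - (b`_t.-1 < d)%R%:Z.
Proof.
move=> size_b; rewrite -{1}size_b => /(cat_cons_at 0) [p [c [r [eq_b ->]]]].
rewrite !Kclass_Kvec // eq_b /= nth_cat ltnn subnn /= xvec_cat.
by rewrite -cat_rcons -(size_rcons p c) xvec_cat cat_rcons Kvec_swap.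
Qed.

Lemma Kclass_trans M q s a pr s' :
  trans M q s a pr s' -> Kclass M s' = Kclass M s + Kdelta a.
Proof.
case=> [b d T t|b d T t|b d T t|b d T t|b d T|b d]
  [[size_b /andP[t_gt0 _] _] _]; rewrite /= in size_b; subst M.
- by move=> le_t_b _; rewrite /Kclass /= xvec_exchange ?t_gt0 ?addr0.
- move=> le_t_b lt_d_bt; rewrite Kclass_step ?t_gt0 //.
  by rewrite lt_d_bt (lt_gtF lt_d_bt) subr0.
- by move=> le_t_b <-; rewrite Kclass_step ?t_gt0 // ltxx subr0 addr0.
- move=> le_t_b lt_bt_d; rewrite Kclass_step ?t_gt0 //.
  by rewrite lt_bt_d (lt_gtF lt_bt_d) addr0.
- by move=> _; rewrite !Kclass_Kvec //= xvec_last xvec_first Kvec_rotate_pred ?addr0.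
- by rewrite !Kclass_Kvec ?size_map //= xvec_last xvec_first Kvec_rotate_shift ?addr0.
Qed.

Lemma Kclass_path M q s l s' :
  bdm_path M q s l s' -> Kclass M s' = Kclass M s + \sum_(a <- l) Kdelta a.
Proof.
elim=> [s1|s1 a pr s2 l' s3 s12 _ ->]; first by rewrite big_nil addr0.
by rewrite (Kclass_trans s12) big_cons addrA.
Qed.

Lemma sum_Kdelta l :
  \sum_(a <- l) Kdelta a = (count_act A_I l)%:Z - (count_act A_Nlt l)%:Z.
Proof.
elim: l => [|a l IHl]; first by rewrite big_nil.
by rewrite big_cons IHl; case: a => /=; lia.
Qed.

Lemma inversions_nseq n a : inversions (nseq n a) = 0%N.
Proof. by elim: n => //= n ->; rewrite count_nseq /= ltxx. Qed.

Lemma Kclass_s0 M : Kclass M (s0 M) = 0.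
Proof.
have -> : s0 M = BDMState (nseq M 0) 0 0 (size (nseq M (0 : int))).+1.
  by rewrite size_nseq.
rewrite Kclass_Kvec; last by rewrite size_nseq.
rewrite xvec_last -cats1 -(nseqD M 1) /Kvec.
rewrite inversions_nseq mulr0 -pair_max_sum_sorted -?inversions_eq0 ?inversions_nseq //.
by rewrite big1 ?mulr0 // => i _; rewrite nth_nseq if_same mul0r.
Qed.

Theorem theorem8 (M q : nat) (hM : (1 <= M)%N) (hq : (2 <= q)%N) :
  (forall (s s' : bdm_state) (a : action) (p : rat),
      in_S M s -> in_S M s' -> trans M q s a p s' ->
      Kclass M s' = Kclass M s + Kdelta a)
  /\
  (forall (s : bdm_state) (l : seq action),
      bdm_path M q (s0 M) l s ->
      Kclass M s - Kclass M (s0 M) = Kclass M s /\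
      Kclass M s = (count_act A_I l)%:Z - (count_act A_Nlt l)%:Z).
Proof.
split=> [s s' a p _ _|s l path_l]; first exact: Kclass_trans.
by rewrite Kclass_s0 subr0 (Kclass_path path_l) Kclass_s0 add0r sum_Kdelta.
Qed.
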